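(* Let $r$ be a rational number with $0<r<1$ and $n\ge2$ an integer. The symmetrized subset $R$ of the free group $F(a,b)$ generated by $u_r^n$ satisfies the small cancellation conditions $C(4n)$ and $T(4)$.
   Context: Words $u_r$: for $r=q/p$ with $0<r\le1$, $p,q$ coprime positive integers, put $\epsilon_i=(-1)^{\lfloor iq/p\rfloor}$; if $p$ is odd, $u_r=a\hat u_r b^{(-1)^q}\hat u_r^{-1}$ with $\hat u_r=b^{\epsilon_1}a^{\epsilon_2}\cdots b^{\epsilon_{p-2}}a^{\epsilon_{p-1}}$; if $p$ is even, $u_r=a\hat u_r a^{-1}\hat u_r^{-1}$ with $\hat u_r=b^{\epsilon_1}a^{\epsilon_2}\cdots a^{\epsilon_{p-2}}b^{\epsilon_{p-1}}$. The symmetrized subset generated by a cyclically reduced word $u$ is the set of all cyclic permutations of $u$ and $u^{-1}$. A nonempty word $b$ is a piece if there exist distinct $w_1,w_2\in R$ with $w_1\equiv bc_1$, $w_2\equiv bc_2$ ($\equiv$ = letter-by-letter equality). Condition $C(p)$: if $w\in R$ is a product $w\equiv w_1\cdots w_t$ of $t$ pieces, then $t\ge p$. Condition $T(q)$: for $w_1,\dots,w_t\in R$ with no successive elements $w_i,w_{i+1}$ (indices mod $t$) an inverse pair, if $t<q$ then at least one of the products $w_1w_2,\dots,w_{t-1}w_t,w_tw_1$ is freely reduced without cancellation. *)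

From mathcomp Require Import all_boot.
Set Implicit Arguments. Unset Strict Implicit. Unset Printing Implicit Defensive.

(* A letter is a pair (g, s): g = false is the generator a, g = true is b;
   s = false is exponent +1, s = true is exponent -1. *)
Definition letter := (bool * bool)%type.
Definition word := seq letter.

Definition la : letter := (false, false).
Definition lb : letter := (true, false).
Definition linv (x : letter) : letter := (x.1, ~~ x.2).
Definition lpow (g : bool) (neg : bool) : letter := (g, neg).

Definition winv (w : word) : word := rev (map linv w).

(* epsilon_i = (-1)^(floor(i q / p)), encoded as a sign bit *)
Definition eps (p q i : nat) : bool := odd (i * q %/ p).

(* \hat u_r = x_1^{eps_1} ... x_{p-1}^{eps_{p-1}}, x_i = b for odd i, a for even i
   (this matches both the p odd and p even patterns). *)
Definition uhat (p q : nat) : word :=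
  [seq lpow (odd i) (eps p q i) | i <- iota 1 p.-1].

(* u_r for r = q/p *)
Definition u_r (p q : nat) : word :=
  if odd p then la :: uhat p q ++ lpow true (odd q) :: winv (uhat p q)
  else la :: uhat p q ++ linv la :: winv (uhat p q).

Definition wpow (w : word) (n : nat) : word := flatten (nseq n w).

Definition symR (u : word) (w : word) : Prop :=
  exists k, w = rot k u \/ w = rot k (winv u).

Definition piece (R : word -> Prop) (b : word) : Prop :=
  b <> [::] /\
  exists w1 w2 c1 c2, R w1 /\ R w2 /\ w1 <> w2 /\ w1 = b ++ c1 /\ w2 = b ++ c2.

Definition condC (R : word -> Prop) (p : nat) : Prop :=
  forall (w : word) (ws : seq word),
    R w -> (forall b, b \in ws -> piece R b) -> w = flatten ws -> p <= size ws.

Definition nocancel (x y : word) : Prop :=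
  x = [::] \/ y = [::] \/ last la x <> linv (head la y).

(* T(q) (Lyndon--Schupp convention 3 <= t < q) *)
Definition condT (R : word -> Prop) (q : nat) : Prop :=
  forall ws : seq word,
    let t := size ws in
    (forall w, w \in ws -> R w) ->
    3 <= t -> t < q ->
    (forall i, i < t -> nth [::] ws ((i.+1) %% t) <> winv (nth [::] ws i)) ->
    exists2 i, i < t & nocancel (nth [::] ws i) (nth [::] ws ((i.+1) %% t)).

From mathcomp Require Import all_boot ssralg ssrnum ssrint intdiv zify ring.
Import GRing.Theory Num.Theory.
Set Implicit Arguments. Unset Strict Implicit. Unset Printing Implicit Defensive.

(* For an integer t let F(t) be the letter x_t^e with x_t = a or b by the
   parity of t and e = (-1)^floor(tq/p).  F is 2p-periodic, F(-t) = F(t)^-1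
   unless tq = 0 (mod p), and u_r = F(0) F(1) ... F(2p-1), the second half
   mirroring \hat u_r.  Hence every element of R is a reading of F: the
   2pn letters F(x), F(x+1), ... or F(x)^-1, F(x-1)^-1, ... for some x.

   Call t a zero marker if tq = 0 and a last marker if tq = -1 (mod p).  Any p
   consecutive positions contain exactly one marker of each kind.  The
   arithmetic core (shift_fixing_markers, reflection_misses_markers) shows
   that two readings agreeing at a zero marker and at a last marker coincide
   (readings_agree).  So a piece covers at most one marker, whereas a relator
   covers 4n of them, which gives C(4n) (readings_condC).  For T(4), readings
   of even length alternate between a and b, so every relator begins and
   ends on different generators, and three cancelling junctions around a
   cycle are impossible (condT4_of_ends). *)

Local Open Scope ring_scope.

Definition oddz (t : int) : bool := (t %% 2)%Z == 1.

Lemma linvK : involutive linv.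
Proof. by case=> g s; rewrite /linv /= negbK. Qed.

(* T(4): if every relator starts and ends on different generators, then in a
   cycle of three relators some junction is reduced, since three cancelling
   junctions would make a generator differ from itself. *)
Lemma condT4_of_ends (R : word -> Prop) :
  (forall w, R w -> (last la w).1 = ~~ (head la w).1) -> condT R 4.
Proof.
move=> ends ws t Rws t3 t4 _; rewrite /t in t3 t4 *; clear t.
case: ws Rws t3 t4 => [|w0 [|w1 [|w2 [|? ?]]]] //= Rws _ _.
have [/ends e0 /ends e1 /ends e2] : [/\ R w0, R w1 & R w2].
  by split; apply: Rws; rewrite !inE eqxx ?orbT.
case c01: (last la w0 == linv (head la w1));
  last by exists 0%N => //; right; right; apply/eqP; rewrite c01.
case c12: (last la w1 == linv (head la w2));
  last by exists 1%N => //; right; right; apply/eqP; rewrite c12.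
case c20: (last la w2 == linv (head la w0));
  last by exists 2%N => //; right; right; apply/eqP; rewrite c20.
move: e0 e1 e2; rewrite (eqP c01) (eqP c12) (eqP c20) /=.
by case: (head la w0).1; case: (head la w1).1; case: (head la w2).1.
Qed.

Definition pos (b : bool) (x : int) (j : nat) : int := if b then x - j%:Z else x + j%:Z.

Lemma posD (b : bool) (x : int) (s j : nat) : pos b (pos b x s) j = pos b x (s + j).
Proof. by rewrite /pos PoszD; case: b; ring. Qed.

(* Backward readings invert their letters. *)
Definition orient (b : bool) (c : letter) : letter := if b then linv c else c.

Lemma orient_inj (b : bool) : injective (orient b).
Proof. by case: b => //=; apply: can_inj linvK. Qed.

Lemma orientN (b : bool) (c : letter) : orient (~~ b) c = orient b (linv c).
Proof. by case: b; rewrite //= linvK. Qed.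

Section Letters.

Variables p q : nat.
Hypothesis p_gt1 : (1 < p)%N.
Hypothesis pq_coprime : coprime p q.

Let p_gt0 : 0 < p%:Z. Proof. by rewrite ltz_nat ltnW. Qed.
Let p_neq0 : p%:Z != 0. Proof. by rewrite lt0r_neq0. Qed.
Let zero_residue : (0 : int) <= 0 < p%:Z. Proof. lia. Qed.
Let last_residue : (0 : int) <= p%:Z - 1 < p. Proof. lia. Qed.

Definition qfloor (t : int) : int := (t * q %/ p)%Z.
Definition qres (t : int) : int := (t * q %% p)%Z.

Definition letter_at (t : int) : letter := (oddz t, oddz (qfloor t)).

Lemma qfloor_qres (t : int) : t * q = qfloor t * p + qres t.
Proof. exact: divz_eq. Qed.

Lemma qres_bounds (t : int) : 0 <= qres t < p.
Proof. by rewrite modz_ge0 // ltz_pmod. Qed.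

Lemma qfloorD (s t : int) :
  qfloor (s + t) = qfloor s + qfloor t + (if p%:Z <= qres s + qres t then 1 else 0).
Proof.
have /andP[s0 sp] := qres_bounds s; have /andP[t0 tp] := qres_bounds t.
have -> : qfloor (s + t) = (((qfloor s + qfloor t) * p + (qres s + qres t)) %/ p)%Z.
  by rewrite {1}/qfloor mulrDl {1}(qfloor_qres s) {1}(qfloor_qres t) addrACA -mulrDl.
rewrite divzMDl //; case: ifP => carry.
  have -> : qres s + qres t = 1 * p%:Z + (qres s + qres t - p%:Z) by ring.
  by rewrite divzMDl // divz_small //; lia.
by rewrite divz_small //; lia.
Qed.

Lemma qres_cong (t t' : int) : (t = t' %[mod p])%Z -> qres t = qres t'.
Proof. by move=> e; rewrite /qres -modzMml e modzMml. Qed.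

Lemma qres_inj (t t' : int) : qres t = qres t' -> (t = t' %[mod p])%Z.
Proof.
move=> e; apply/eqP; rewrite eqz_mod_dvd -(@Gauss_dvdzl _ _ q) //.
by rewrite mulrBl -eqz_mod_dvd; apply/eqP.
Qed.

Lemma qres_surj (r : int) : 0 <= r < p -> exists c, qres c = r.
Proof.
move=> r_bounds; have /coprimezP[[u v] /= bez] : coprimez p q by [].
exists (r * v); rewrite /qres.
have -> : r * v * q = (- r * u) * p + r by rewrite -mulrA -[X in _ + X]mulr1 -bez; ring.
by rewrite modzMDl modz_small.
Qed.

Lemma coprime_odd : odd p || odd q.
Proof.
apply/negPn/negP; rewrite negb_or => /andP[ep eq].
have : (2 %| gcdn p q)%N by rewrite dvdn_gcd !dvdn2 ep eq.
by move: pq_coprime; rewrite /coprime => /eqP ->.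
Qed.

Lemma letter_at_period (t k : int) : letter_at (t + k * (2 * p)) = letter_at t.
Proof.
rewrite /letter_at /qfloor.
have -> : (t + k * (2 * p)) * q = (2 * k * q) * p + t * q by ring.
by rewrite divzMDl //; congr (_, _); rewrite /oddz; lia.
Qed.

Lemma letter_at_opp (t : int) : qres t != 0 -> letter_at (- t) = linv (letter_at t).
Proof.
move=> nz; have sum0 : qfloor (t + - t) = 0 by rewrite subrr /qfloor mul0r div0z.
rewrite qfloorD in sum0.
have := qfloor_qres t; have := qfloor_qres (- t); rewrite mulNr.
have := qres_bounds t; have := qres_bounds (- t).
by move: sum0 nz; rewrite /letter_at /linv /oddz /=; case: ifP => *; congr (_, _); lia.
Qed.

Lemma qfloorD_zero (s t : int) : qres s = 0 -> qfloor (s + t) = qfloor s + qfloor t.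
Proof. by move=> s0; rewrite qfloorD s0 add0r; have := qres_bounds t; case: ifP; lia. Qed.

Lemma qfloorD_last (s t : int) : qres s = p%:Z - 1 ->
  qfloor (s + t) = qfloor s + qfloor t + (if qres t == 0 then 0 else 1).
Proof. by move=> s1; rewrite qfloorD s1; have := qres_bounds t; case: ifP; case: eqP; lia. Qed.

Lemma shift_fixing_markers (t0 t1 d : int) : qres t0 = 0 -> qres t1 = p%:Z - 1 ->
  letter_at (t0 + d) = letter_at t0 -> letter_at (t1 + d) = letter_at t1 ->
  (2 * p %| d)%Z.
Proof.
move=> m0 m1 [e0 f0] [_ f1].
rewrite qfloorD_zero // in f0; rewrite qfloorD_last // in f1.
have d_res : qres d = 0 by move: f0 f1; case: eqP => //; rewrite /oddz; lia.
have /dvdzP[e de] : (p %| d)%Z.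
  by rewrite -(@Gauss_dvdzl _ _ q) //; apply/dvdz_mod0P.
have qfloor_d : qfloor d = e * q by rewrite /qfloor de mulrAC mulzK.
have e_even : (e %% 2)%Z = 0.
  move: e0 f0 coprime_odd; rewrite qfloor_d de /oddz; lia.
apply/dvdzP; exists (e %/ 2)%Z; rewrite de {1}(divz_eq e 2) e_even; ring.
Qed.

Lemma reflection_misses_markers (t0 t1 c : int) : qres t0 = 0 -> qres t1 = p%:Z - 1 ->
  letter_at (c - t0) = linv (letter_at t0) -> letter_at (c - t1) = linv (letter_at t1) ->
  False.
Proof.
move=> m0 m1 [e0 f0] [_ f1].
have h0 : qfloor c = qfloor t0 + qfloor (c - t0) by rewrite -qfloorD_zero // addrC subrK.
have h1 := qfloorD_last (c - t1) m1; rewrite addrC subrK in h1.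
have c1_res : qres (c - t1) = 0.
  have [//|nz] := eqVneq (qres (c - t1)) 0; rewrite (negbTE nz) in h1.
  by move: f1 f0 h1 h0; rewrite /oddz; lia.
have cq : c * q = (qfloor t1 + qfloor (c - t1) + 1) * p - 1.
  have := qfloor_qres t1; have := qfloor_qres (c - t1); rewrite m1 c1_res.
  have -> : (c - t1) * q = c * q - t1 * q by ring.
  lia.
have c_even : (c %% 2)%Z = 0 by move: e0; rewrite /oddz; lia.
have m_even : ((qfloor t1 + qfloor (c - t1) + 1) %% 2)%Z = 0.
  by move: f1; rewrite /oddz; clear; lia.
by move: cq c_even m_even; move: (qfloor t1 + qfloor (c - t1) + 1) => m; lia.
Qed.

Definition read (b : bool) (x : int) (j : nat) : letter := orient b (letter_at (pos b x j)).
Definition reading (b : bool) (x : int) (l : nat) : word := map (read b x) (iota 0 l).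

Lemma size_reading (b : bool) (x : int) (l : nat) : size (reading b x l) = l.
Proof. by rewrite size_map size_iota. Qed.

Lemma readingD (b : bool) (x : int) (l m : nat) :
  reading b x (l + m) = reading b x l ++ reading b (pos b x l) m.
Proof.
rewrite /reading iotaD map_cat add0n -[in iota l _](addn0 l) iotaDl -map_comp.
by congr (_ ++ _); apply: eq_map => j; rewrite /read /= posD.
Qed.

Lemma read_period (b : bool) (x k : int) : read b (x + k * (2 * p)) =1 read b x.
Proof.
move=> j; rewrite /read; have -> : pos b (x + k * (2 * p)) j = pos b x j + k * (2 * p).
  by rewrite /pos; case: (b); ring.
by rewrite letter_at_period.
Qed.

Lemma reading_period (b : bool) (x k : int) (l : nat) :
  reading b (x + k * (2 * p)) l = reading b x l.
Proof. exact/eq_map/read_period. Qed.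

Lemma prefix_read (b b' : bool) (x y : int) (l L : nat) (c : word) :
  reading b' y L = reading b x l ++ c -> forall j, (j < l)%N -> read b' y j = read b x j.
Proof.
move=> e j jl.
have lL : (l <= L)%N by rewrite -(size_reading b' y L) e size_cat size_reading leq_addr.
have := congr1 (nth la ^~ j) e; rewrite nth_cat size_reading jl.
by rewrite !(nth_map 0%N) ?size_iota ?nth_iota //; apply: leq_trans lL.
Qed.

(* Letters of a reading alternate between a and b, so a reading of even
   positive length starts and ends on different generators. *)
Lemma reading_ends (b : bool) (x : int) (l : nat) : (0 < l)%N -> ~~ odd l ->
  (last la (reading b x l)).1 = ~~ (head la (reading b x l)).1.
Proof.
move=> l_gt0 l_even.
have gen j : (j < l)%N -> (nth la (reading b x l) j).1 = oddz (pos b x j).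
  by move=> jl; rewrite (nth_map 0%N) ?size_iota ?nth_iota // /read; case: (b).
have last_lt : (l.-1 < l)%N by lia.
rewrite -nth_last -nth0 size_reading !gen //.
by rewrite /oddz /pos; case: (b); lia.
Qed.

(* Two readings agreeing at a zero marker and at a last marker of the first
   one are the same reading: in the same direction they differ by a period,
   in opposite directions they cannot agree there at all. *)
Lemma readings_agree (b b' : bool) (x y : int) (j0 j1 : nat) :
  qres (pos b x j0) = 0 -> qres (pos b x j1) = p%:Z - 1 ->
  read b' y j0 = read b x j0 -> read b' y j1 = read b x j1 -> read b' y =1 read b x.
Proof.
move=> m0 m1; have [-> {b'}|] := eqVneq b' b.
  have shift j : pos b y j = pos b x j + (y - x) by rewrite /pos; case: (b); ring.
  rewrite /read !shift => /orient_inj e0 /orient_inj e1.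
  have /dvdzP[k dk] := shift_fixing_markers m0 m1 e0 e1.
  have -> : y = x + k * (2 * p) by rewrite -dk; ring.
  exact: read_period.
move=> /negPf neq; have -> : b' = ~~ b by case: (b) b' neq => -[].
have refl j : pos (~~ b) y j = (x + y) - pos b x j by rewrite /pos; case: (b); ring.
rewrite /read !orientN !refl => /orient_inj e0 /orient_inj e1; exfalso.
by apply: (reflection_misses_markers m0 m1); rewrite -?e0 -?e1 linvK.
Qed.

Definition kind_count (r : int) (b : bool) (x : int) (l : nat) : nat :=
  count (fun j => qres (pos b x j) == r) (iota 0 l).
Definition markers (b : bool) (x : int) (l : nat) : nat :=
  kind_count 0 b x l + kind_count (p%:Z - 1) b x l.

Lemma kind_countD (r : int) (b : bool) (x : int) (l m : nat) :
  kind_count r b x (l + m) = kind_count r b x l + kind_count r b (pos b x l) m.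
Proof.
rewrite /kind_count iotaD count_cat add0n -[in iota l _](addn0 l) iotaDl count_map.
by congr (_ + _); apply: eq_count => j; rewrite /= posD.
Qed.

Lemma markersD (b : bool) (x : int) (l m : nat) :
  markers b x (l + m) = markers b x l + markers b (pos b x l) m.
Proof. by rewrite /markers !kind_countD addnACA. Qed.

Lemma kind_count_witness (r : int) (b : bool) (x : int) (l : nat) :
  (0 < kind_count r b x l)%N -> exists2 j, (j < l)%N & qres (pos b x j) = r.
Proof. by rewrite -has_count => /hasP[j]; rewrite mem_iota => /= jl /eqP; exists j. Qed.

Lemma window_inj (b : bool) (x : int) (i j : nat) : (i < p)%N -> (j < p)%N ->
  (pos b x i = pos b x j %[mod p])%Z -> i = j.
Proof.
move=> ip jp /eqP; rewrite eqz_mod_dvd dvdzE => dvd_p.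
have dist_lt : (`|pos b x i - pos b x j| < p)%N by clear dvd_p; rewrite /pos; case: b; lia.
have dist0 : `|pos b x i - pos b x j|%N = 0%N.
  apply/eqP; apply: contraTT dvd_p; rewrite -lt0n => /dvdn_leq le_p.
  by apply/negP => /le_p; rewrite leqNgt dist_lt.
by move: dist0; clear dvd_p dist_lt; rewrite /pos; case: b; lia.
Qed.

Lemma window_meets (b : bool) (x c : int) :
  exists2 j : nat, (j < p)%N & (pos b x j = c %[mod p])%Z.
Proof.
pose s := if b then x - c else c - x.
have /andP[m0 mp] : 0 <= (s %% p)%Z < p by rewrite modz_ge0 ?ltz_pmod.
exists `|(s %% p)%Z|%N; first by rewrite -ltz_nat gez0_abs.
apply/eqP; rewrite eqz_mod_dvd; apply/dvdzP.
exists (if b then (s %/ p)%Z else - (s %/ p)%Z); rewrite /pos gez0_abs //.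
by move: (divz_eq s p) m0; rewrite /s; clear s mp; case: b; lia.
Qed.

Lemma kind_count_window (r : int) (b : bool) (x : int) :
  0 <= r < p -> kind_count r b x p = 1%N.
Proof.
move=> /qres_surj[c <-]; have [j0 j0p j0c] := window_meets b x c.
rewrite /kind_count (@eq_in_count _ _ (pred1 j0)) ?count_uniq_mem ?iota_uniq ?mem_iota ?j0p //.
move=> j; rewrite mem_iota add0n => jp /=; apply/eqP/eqP => [/qres_inj jc | ->].
  by apply: (@window_inj b x _ _ jp j0p); rewrite jc j0c.
exact: qres_cong.
Qed.

Lemma kind_count_short (r : int) (b : bool) (x : int) (l : nat) :
  0 <= r < p -> (l <= p)%N -> (kind_count r b x l <= 1)%N.
Proof.
move=> rp lp; have := kind_count_window b x rp.
by rewrite -(subnKC lp) kind_countD; lia.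
Qed.

Lemma markers_periods (b : bool) (x : int) (m : nat) : markers b x (m * p)%N = (2 * m)%N.
Proof.
elim: m x => [|m IH] x; first by rewrite /markers /kind_count.
rewrite mulSn markersD IH /markers !kind_count_window //; lia.
Qed.

Section Pieces.

Variables (R : word -> Prop) (m : nat).
Hypothesis R_readings : forall w, R w -> exists b x, w = reading b x (m * p)%N.

(* A piece never covers both a zero marker and a last marker: the two
   distinct relators it starts would be the same reading. *)
Lemma piece_marker_kinds (b : bool) (x : int) (l j0 j1 : nat) :
  piece R (reading b x l) -> (j0 < l)%N -> (j1 < l)%N ->
  qres (pos b x j0) = 0 -> qres (pos b x j1) = p%:Z - 1 -> False.
Proof.
move=> [_ [w1 [w2 [c1 [c2 [R1 [R2 [ne [e1 e2]]]]]]]]] j0l j1l m0 m1.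
suff same w c : R w -> w = reading b x l ++ c -> w = reading b x (m * p)%N.
  by apply: ne; rewrite (same _ _ R1 e1) (same _ _ R2 e2).
move=> /R_readings[b' [y ->]] e; have agree := prefix_read e.
exact/eq_map/(readings_agree m0 m1 (agree _ j0l) (agree _ j1l)).
Qed.

Lemma piece_markers (b : bool) (x : int) (l : nat) :
  piece R (reading b x l) -> (markers b x l <= 1)%N.
Proof.
move=> pc.
have one_kind : ~~ ((0 < kind_count 0 b x l) && (0 < kind_count (p%:Z - 1) b x l))%N.
  apply/negP => /andP[/kind_count_witness[j0 j0l m0] /kind_count_witness[j1 j1l m1]].
  exact: piece_marker_kinds pc j0l j1l m0 m1.
have [pl|lp] := leqP p l.
  move: one_kind; rewrite -(subnKC pl) !kind_countD !kind_count_window //; lia.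
have := kind_count_short b x zero_residue (ltnW lp).
have := kind_count_short b x last_residue (ltnW lp).
by move: one_kind; rewrite /markers; lia.
Qed.

Lemma pieces_markers (b : bool) (x : int) (ws : seq word) :
  (forall v, v \in ws -> piece R v) ->
  reading b x (size (flatten ws)) = flatten ws -> (markers b x (size (flatten ws)) <= size ws)%N.
Proof.
elim: ws x => [|v ws IH] x pcs //=.
rewrite size_cat readingD => /eqP; rewrite eqseq_cat ?size_reading // => /andP[/eqP ev /eqP ews].
rewrite markersD -add1n; apply: leq_add.
  by apply: piece_markers; rewrite ev; apply: pcs; rewrite mem_head.
by apply: IH ews => u u_ws; apply: pcs; rewrite inE u_ws orbT.
Qed.

(* A relator of m periods covers 2m markers, so it needs 2m pieces. *)
Lemma readings_condC : condC R (2 * m)%N.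
Proof.
move=> w ws /R_readings[b [x ->]] pcs e.
have sz : size (flatten ws) = (m * p)%N by rewrite -e size_reading.
by rewrite -(markers_periods b x m) -sz pieces_markers // sz.
Qed.

End Pieces.

Lemma letter_at_nat (i : nat) : letter_at i = lpow (odd i) (eps p q i).
Proof. by rewrite /letter_at /qfloor /lpow /eps -PoszM divz_nat /oddz; congr (_, _); lia. Qed.

Lemma reading_iota (s l : nat) : reading false s l = [seq letter_at i%:Z | i <- iota s l].
Proof.
rewrite /reading -[in iota s _](addn0 s) iotaDl -map_comp.
by apply: eq_map => j; rewrite /read /= PoszD.
Qed.

Lemma qres_neq0 (i : nat) : (0 < i < p)%N -> qres i != 0.
Proof.
move=> /andP[i_gt0 ip]; apply/eqP => i0.
suff : i = 0%N by move: i_gt0 => /[swap] ->.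
apply: (@window_inj false 0 _ _ ip (ltnW p_gt1)); rewrite /pos !add0r.
by apply: qres_inj; rewrite i0 /qres mul0r mod0z.
Qed.

Lemma winv_reading (x : int) (l : nat) : winv (reading false x l) = reading true (x + l%:Z - 1) l.
Proof.
have winv_cat (s t : word) : winv (s ++ t) = winv t ++ winv s by rewrite /winv map_cat rev_cat.
elim: l => [|l IH] //; rewrite -addn1 readingD winv_cat IH addnC readingD.
congr (_ :: _); first by rewrite /read /pos /=; congr (linv (letter_at _)); lia.
by congr (reading _ _ _); rewrite /pos; lia.
Qed.

(* u_r = F(0) F(1) ... F(2p - 1): its first half is a, \hat u_r and the middle
   letter, and its second half is the mirror image of \hat u_r. *)
Lemma uhat_iota : uhat p q = [seq letter_at i%:Z | i <- iota 1 p.-1].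
Proof. by apply: eq_map => i; rewrite letter_at_nat. Qed.

Lemma winv_uhat : winv (uhat p q) = [seq letter_at i%:Z | i <- iota p.+1 p.-1].
Proof.
rewrite uhat_iota -!reading_iota winv_reading /reading; apply/eq_in_map => j.
rewrite mem_iota add0n /read /pos /= => jp.
have -> : p.+1%:Z + j%:Z = - (p.-1 - j)%N%:Z + 1 * (2 * p%:Z) by lia.
have -> : 1 + p.-1%:Z - 1 - j%:Z = (p.-1 - j)%N%:Z by lia.
by rewrite letter_at_period letter_at_opp // qres_neq0 //; lia.
Qed.

Lemma middle_letter : (if odd p then lpow true (odd q) else linv la) = letter_at p.
Proof.
rewrite letter_at_nat /eps mulKn ?(ltnW p_gt1) //; case: ifP => p_odd //.
by move: coprime_odd; rewrite p_odd /lpow /linv /= => ->.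
Qed.

Lemma u_r_reading : u_r p q = reading false 0 (2 * p)%N.
Proof.
have -> : u_r p q =
    la :: uhat p q ++ (if odd p then lpow true (odd q) else linv la) :: winv (uhat p q).
  by rewrite /u_r; case: ifP.
have -> : (2 * p = 1 + (p.-1 + (1 + p.-1)))%N by lia.
rewrite winv_uhat uhat_iota middle_letter reading_iota !iotaD !map_cat.
have -> : (0 + 1 + p.-1 = p)%N by lia.
by rewrite !addn1 /= (letter_at_nat 0) /eps mul0n div0n.
Qed.

Lemma wpow_reading (n : nat) : wpow (u_r p q) n = reading false 0 (n * (2 * p))%N.
Proof.
elim: n => [|n IH] //; have -> : wpow (u_r p q) n.+1 = u_r p q ++ wpow (u_r p q) n by [].
rewrite IH u_r_reading (mulSn n (2 * p)) (readingD false 0 (2 * p)).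
have -> : pos false 0 (2 * p)%N = 0 + 1 * (2 * p%:Z) by rewrite /pos; lia.
by rewrite reading_period.
Qed.

Lemma rot_reading (b : bool) (x : int) (m s : nat) : (s <= m * (2 * p))%N ->
  rot s (reading b x (m * (2 * p))%N) = reading b (pos b x s) (m * (2 * p))%N.
Proof.
set L := (m * (2 * p))%N => sL.
have -> : reading b x L = reading b x s ++ reading b (pos b x s) (L - s).
  by rewrite -readingD subnKC.
have -> : reading b (pos b x s) L = reading b (pos b x s) (L - s) ++ reading b x s.
  rewrite -{1}(subnK sL) readingD posD subnKC //.
  have -> : pos b x L = x + (if b then - m%:Z else m%:Z) * (2 * p%:Z).
    by rewrite /pos /L; case: (b); lia.
  by rewrite reading_period.
by rewrite -{1}(size_reading b x s) rot_size_cat.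
Qed.

Lemma relator_reading (n : nat) (w : word) : symR (wpow (u_r p q) n) w ->
  exists b x, w = reading b x (n * (2 * p))%N.
Proof.
have rot_any b x k : exists x', rot k (reading b x (n * (2 * p))%N) = reading b x' (n * (2 * p))%N.
  have [kL|Lk] := leqP k (n * (2 * p))%N; first by exists (pos b x k); rewrite rot_reading.
  by exists x; rewrite rot_oversize // size_reading ltnW.
rewrite /symR wpow_reading winv_reading add0r => -[k [->|->]].
  by have [x' ->] := rot_any false 0 k; exists false, x'.
by have [x' ->] := rot_any true ((n * (2 * p))%N%:Z - 1) k; exists true, x'.
Qed.

End Letters.

Local Close Scope ring_scope.

Theorem mainTheorem6 (p q n : nat) :
  0 < q -> q < p -> coprime p q -> 2 <= n ->
  condC (symR (wpow (u_r p q) n)) (4 * n) /\ condT (symR (wpow (u_r p q) n)) 4.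
Proof.
move=> q_gt0 q_lt_p pq n_ge2; have p_gt1 : 1 < p by apply: leq_ltn_trans q_lt_p.
have relators w : symR (wpow (u_r p q) n) w -> exists b x, w = reading p q b x (2 * n * p).
  by move=> /(relator_reading p_gt1 pq)[b [x ->]]; exists b, x; rewrite mulnCA mulnA.
split.
  by rewrite (_ : 4 * n = 2 * (2 * n)); [exact: (readings_condC p_gt1 pq relators) | rewrite mulnA].
apply: condT4_of_ends => w /relators[b [x ->]].
by apply: reading_ends; rewrite ?oddM // !muln_gt0 (ltnW p_gt1) (ltnW n_ge2).
Qed.
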